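(* Let $\mathbf b,\mathbf b'\in\mathrm{Seq}(B,d)$. Then $\mathbf b^*:=b_1^*\cdots b_d^*\in\mathrm{Seq}(B^*,d)$, and $(y_{\mathbf b'},y_{\mathbf b^*})_d=\pm\, d!\,\delta_{\mathbf b\sim\mathbf b'}$, where $\delta_{\mathbf b\sim\mathbf b'}$ is $1$ if $\mathbf b\sim\mathbf b'$ and $0$ otherwise.
   Context: Let $R$ be a principal ideal domain of characteristic $0$. Supermodules are $\mathbb Z/2$-graded, $|v|$ is the parity of a homogeneous $v$. A calibrated $R$-supermodule is a free $R$-supermodule $V=V_{\bar0}\oplus V_{\bar1}$ of finite rank with a decomposition $V_{\bar0}=V_{\mathfrak a}\oplus V_{\mathfrak c}$ into free $R$-submodules; given bases $B_{\mathfrak a},B_{\mathfrak c},B_{\bar1}$ of these three pieces and a total order on $B=B_{\mathfrak a}\sqcup B_{\mathfrak c}\sqcup B_{\bar1}$, define: $\mathfrak S_d$ acts on $V^{\otimes d}$ on the right by $(v_1\otimes\cdots\otimes v_d)^\sigma=(-1)^{\langle\sigma;\mathbf v\rangle}v_{\sigma1}\otimes\cdots\otimes v_{\sigma d}$, $\langle\sigma;\mathbf v\rangle$ = number of $k<l$ with $\sigma^{-1}k>\sigma^{-1}l$ and $v_k,v_l$ odd; $\mathfrak S_d$ acts on $B^d$ by place permutations and $\sim$ means same orbit; for $\mathbf b\in B^d$, $\langle\mathbf b\rangle$ = number of $k<l$ with $b_k,b_l\in B_{\bar1}$, $b_k>b_l$; $[\mathbf b]^!_{\mathfrak c}=\prod_{b\in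 B_{\mathfrak c}}\#\{k:b_k=b\}!$; $\mathrm{Seq}(B,d)$ = tuples in $B^d$ in which only elements of $B_{\mathfrak a}\sqcup B_{\mathfrak c}$ may repeat; $x_{\mathbf b}=\sum(-1)^{\langle\mathbf b\rangle+\langle\mathbf b'\rangle}b'_1\otimes\cdots\otimes b'_d$ over distinct $\mathbf b'\sim\mathbf b$, and $y_{\mathbf b}=[\mathbf b]^!_{\mathfrak c}x_{\mathbf b}$. Setting: $V$ is a calibrated $R$-supermodule equipped with an even, non-degenerate, $R$-valued bilinear form $(\cdot,\cdot)$ which is supersymmetric or superantisymmetric, such that $(V_{\mathfrak a},V_{\mathfrak a})=0$ and the restriction of $(\cdot,\cdot)$ to $V_{\mathfrak a}\times V_{\mathfrak c}$ is a perfect pairing. Choose bases $B_{\mathfrak a}=\{a_1,\dots,a_r\}$, $B_{\mathfrak c}=\{c_1,\dots,c_r\}$ with $(a_i,c_j)=\delta_{i,j}$, a basis $B_{\bar1}$ of $V_{\bar1}$, and $B=B_{\mathfrak a}\sqcup B_{\mathfrak c}\sqcup B_{\bar1}$. Let $B^*=\{b^*:b\in B\}$ be the dual basis, $(b',b^* )=\delta_{b,b'}$ for $b,b'\in B$. Then $c_i^*=\pm a_i$, and $V$ is also calibrated with the same $V_{\mathfrak a}$ and complement $V'_{\mathfrak c}=\mathrm{span}_R\{a_1^*,\dots,a_r^*\}$, with basis $B^*$ split as $B^*_{\mathfrak a}=\{c_i^*\}$, $B^*_{\mathfrak c}=\{a_i^*\}$, $B^*_{\bar1}=\{b^*:b\in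 B_{\bar1}\}$ (and some fixed total order on $B^*$); $\mathrm{Seq}(B^*,d)$ and $y_{\mathbf b^*}$ are formed with respect to this data. The form extends to $V^{\otimes d}$ by $(v_1\otimes\cdots\otimes v_d,w_1\otimes\cdots\otimes w_d)_d=(-1)^{\langle\mathbf v,\mathbf w\rangle}(v_1,w_1)\cdots(v_d,w_d)$, where $\langle\mathbf v,\mathbf w\rangle$ is the number of pairs $k>l$ with $v_k$ and $w_l$ odd. *)

From HB Require Import structures.
From mathcomp Require Import all_boot all_order all_algebra.
Set Implicit Arguments.
Unset Strict Implicit.
Unset Printing Implicit Defensive.
Import GRing.Theory.
Local Open Scope ring_scope.

(* Kind of a basis vector of a calibrated supermodule:
   KA = in B_a, KC = in B_c (both even), KO = in B_odd. *)
Inductive kind := KA | KC | KO.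
Definition oddk (k : kind) : bool := if k is KO then true else false.
Definition isKC (k : kind) : bool := if k is KC then true else false.

Definition is_PID (R : comNzRingType) : Prop :=
  forall I : R -> Prop, I 0 ->
    (forall x y, I x -> I y -> I (x - y)) ->
    (forall a x, I x -> I (a * x)) ->
    exists g : R, forall x, I x <-> exists k, x = k * g.

Section Super.
Variables (R : comNzRingType) (B : finType).

(* V is modelled as coordinate functions B -> R on its (homogeneous) basis B;
   V^{(x)d} as coordinate functions d.-tuple B -> R on the basis B^d. *)

(* <t> : number of k<l with t_k,t_l odd and t_k > t_l for the order rk
   (a total order on B given by an injective rank function rk). *)
Definition invs (kd : B -> kind) (rk : B -> nat) d (t : d.-tuple B) : nat :=
  #|[set kl : 'I_d * 'I_d | [&& (kl.1 < kl.2)%N, oddk (kd (tnth t kl.1)),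
      oddk (kd (tnth t kl.2)) & (rk (tnth t kl.2) < rk (tnth t kl.1))%N]]|.

(* x_b = sum over distinct b' ~ b of (-1)^(<b>+<b'>) e(b'_1) (x) ... (x) e(b'_d),
   where e : B -> V maps an index to the corresponding basis vector. *)
Definition xvec (kd : B -> kind) (rk : B -> nat) (e : B -> B -> R) d
    (b : d.-tuple B) : d.-tuple B -> R :=
  fun u => \sum_(t : d.-tuple B | perm_eq t b)
     (-1) ^+ (invs kd rk b + invs kd rk t) * \prod_(k < d) e (tnth t k) (tnth u k).

Definition cfact (kd : B -> kind) d (b : d.-tuple B) : nat :=
  \prod_(x : B | isKC (kd x)) (count_mem x b)`!.

Definition yvec (kd : B -> kind) (rk : B -> nat) (e : B -> B -> R) d
    (b : d.-tuple B) : d.-tuple B -> R :=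
  fun u => (cfact kd b)%:R * xvec kd rk e b u.

Definition seqB (kd : B -> kind) d (b : d.-tuple B) : bool :=
  [forall x : B, oddk (kd x) ==> (count_mem x b <= 1)%N].

Definition form1 (G : B -> B -> R) (v w : B -> R) : R :=
  \sum_(x : B) \sum_(y : B) v x * G x y * w y.

Definition npair (kd : B -> kind) d (s t : d.-tuple B) : nat :=
  #|[set kl : 'I_d * 'I_d | [&& (kl.2 < kl.1)%N, oddk (kd (tnth s kl.1))
      & oddk (kd (tnth t kl.2))]]|.

Definition formd (G : B -> B -> R) (kd : B -> kind) d (X Y : d.-tuple B -> R) : R :=
  \sum_(s : d.-tuple B) \sum_(t : d.-tuple B)
     X s * Y t * ((-1) ^+ npair kd s t * \prod_(k < d) G (tnth s k) (tnth t k)).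

Definition delta (x : B) : B -> R := fun y => (x == y)%:R.

End Super.

(* Concrete basis B = {a_1..a_r} + {c_1..c_r} + B_odd *)
Definition Bt (r : nat) (O : finType) : finType := (('I_r + 'I_r) + O)%type.

Definition kindB r O (x : Bt r O) : kind :=
  match x with inl (inl _) => KA | inl (inr _) => KC | inr _ => KO end.

(* calibration of B^*: B^*_a = {c_i^*}, B^*_c = {a_i^*}, B^*_odd = {b^* : b odd};
   the star of index x has kind kindStar x *)
Definition kindStar r O (x : Bt r O) : kind :=
  match x with inl (inl _) => KC | inl (inr _) => KA | inr _ => KO end.

Definition avec r O (i : 'I_r) : Bt r O := inl (inl i).
Definition cvec r O (i : 'I_r) : Bt r O := inl (inr i).

From HB Require Import structures.
From mathcomp Require Import all_boot all_order all_algebra.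
From mathcomp Require Import perm.
From mathcomp Require Import ring.
Set Implicit Arguments. Unset Strict Implicit. Unset Printing Implicit Defensive.
Import GRing.Theory.

(* Because the form is parity-preserving and [B^*] is dual to [B], pairing a
   tensor with [y_{b^*}] extracts, up to the sign [(-1)^<s,s>], its coefficient
   on [s] weighted by [x_b]; so [(y_{b'}, y_{b^*})_d] is a sum over the common
   rearrangements [s] of [b] and [b'] and vanishes unless [b ~ b'].  Modulo 2,
   [<s> + <s^*> + <s,s>] counts the pairs of odd entries of [s] on which the
   orders of [B] and [B^*] agree, which does not depend on the arrangement [s];
   hence all terms carry the same sign.  There are [d! / prod_x m_x!] of them,
   and [[b]^!_c [b^*]^!_c = prod_x m_x!] because every even index is in [B_c]
   or in [B^*_c] and odd ones occur at most once. *)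

Lemma sum_count_mem (T : finType) (s : seq T) :
  \sum_(x : T) count_mem x s = size s.
Proof.
elim: s => [|y s IH] /=; first by rewrite big1.
rewrite big_split /= IH (bigD1 y) //= eqxx big1 ?addn0 ?add1n // => x /negbTE.
by rewrite eq_sym => ->.
Qed.

Lemma size_permutations_prod_fact (T : finType) (s : seq T) :
  size (permutations s) * \prod_(x : T) (count_mem x s)`! = (size s)`!.
Proof.
move Dn: (size s) => n; elim: n s Dn => [|n IH] s Dn.
  by move/size0nil: Dn => ->; rewrite big1.
rewrite (perm_size (permutationsE _)) ?Dn // size_allpairs_dep sumnE big_map.
rewrite big_distrl /=.
have -> : \sum_(x <- undup s) size (permutations (rem x s)) *
     \prod_(y : T) (count_mem y s)`! = \sum_(x <- undup s) n`! * count_mem x s.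
  rewrite !big_seq; apply: eq_bigr => x; rewrite mem_undup => xs.
  have count_rem y : count_mem y s = (x == y) + count_mem y (rem x s).
    by rewrite (seq.permP (perm_to_rem xs)).
  have := IH (rem x s); rewrite size_rem // Dn => /(_ erefl) IHx.
  rewrite -{1}IHx (bigD1 x) ?mem_index_enum //= [X in _ = _ * X * _](bigD1 x) //=.
  rewrite count_rem eqxx add1n factS.
  rewrite (eq_bigr (fun y => (count_mem y (rem x s))`!)); last first.
    by move=> y /andP[_ /negbTE]; rewrite count_rem eq_sym => ->.
  rewrite (eq_bigl (fun i => i != x)) //; last by move=> i; rewrite mem_index_enum.
  by rewrite -!mulnA; congr (_ * _); rewrite mulnCA (mulnC _.+1).
rewrite -(big_distrr (n`!)) /= big_uniq ?undup_uniq //.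
rewrite (eq_bigl (mem s)); last by move=> x; rewrite mem_undup.
rewrite big_mkcond /= (eq_bigr (fun x => count_mem x s)); last first.
  by move=> x _; case: ifP => // /negbT xs; apply/esym/count_memPn.
by rewrite sum_count_mem Dn factS mulnC.
Qed.

Lemma card_perm_eq_tuple (T : finType) d (b : d.-tuple T) :
  #|[pred t : d.-tuple T | perm_eq t b]| = size (permutations b).
Proof.
rewrite cardE -(size_map val); apply: perm_size; apply: uniq_perm.
- by rewrite (map_inj_uniq val_inj) enum_uniq.
- exact: permutations_uniq.
move=> s; rewrite mem_permutations; apply/mapP/idP => [[t]|Ps].
  by rewrite mem_enum inE => Pt ->.
have Hs : size s == d by rewrite (perm_size Ps) size_tuple.
by exists (Tuple Hs); rewrite // mem_enum inE.
Qed.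

Lemma card_set_sum (I : finType) (P : pred I) :
  #|[set x | P x]| = \sum_x (P x : nat).
Proof.
rewrite -sum1_card big_mkcond /=; apply: eq_bigr => x _.
by rewrite inE; case: (P x).
Qed.

Section PairCount.
Variables (T : finType) (d : nat) (f : T -> T -> bool).
Hypothesis f_sym : forall x y, f x y = f y x.

Definition pair_count (s : d.-tuple T) : nat :=
  \sum_(kl : 'I_d * 'I_d) ((kl.1 < kl.2)%N && f (tnth s kl.1) (tnth s kl.2)).

Lemma pair_count_double s :
  (pair_count s * 2 =
   \sum_(kl : 'I_d * 'I_d) ((kl.1 != kl.2) && f (tnth s kl.1) (tnth s kl.2)))%N.
Proof.
rewrite /pair_count muln2 -addnn.
rewrite [X in (_ + X)%N](reindex_inj (can_inj swap_pairK)) -big_split /=.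
apply: eq_bigr => -[k l] _ /=.
by rewrite neq_ltn f_sym; case: (ltngtP k l) => //= _; rewrite addn0.
Qed.

Lemma pair_count_perm (s t : d.-tuple T) : perm_eq s t -> pair_count s = pair_count t.
Proof.
case/tuple_permP => p Es; apply/eqP; rewrite -(eqn_pmul2r (isT : 0 < 2)%N).
rewrite !pair_count_double; apply/eqP.
have -> : s = [tuple tnth t (p i) | i < d] by apply: val_inj.
rewrite [in RHS](reindex_inj (h := fun kl => (p kl.1, p kl.2))); last first.
  by move=> [k l] [k' l'] /= [/perm_inj -> /perm_inj ->].
by apply: eq_bigr => -[k l] _ /=; rewrite !tnth_mktuple (inj_eq perm_inj).
Qed.

End PairCount.

Local Open Scope ring_scope.

Section SignInvariance.
Variables (T : finType) (kd ks : T -> kind) (rB rS : T -> nat).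
Hypotheses (oddk_ks : forall x, oddk (ks x) = oddk (kd x)).
Hypotheses (rB_inj : injective rB) (rS_inj : injective rS).

Definition orders_agree (x y : T) : bool :=
  [&& oddk (kd x), oddk (kd y) & ((rB y < rB x)%N == (rS y < rS x)%N)].

Lemma orders_agree_sym x y : orders_agree x y = orders_agree y x.
Proof.
rewrite /orders_agree; case: (oddk (kd x)); case: (oddk (kd y)) => //=.
have [->//|nxy] := eqVneq x y.
have nB : rB x != rB y by rewrite (inj_eq rB_inj).
have nS : rS x != rS y by rewrite (inj_eq rS_inj).
by case: (ltngtP (rB x) (rB y)) nB => // _ _; case: (ltngtP (rS x) (rS y)) nS.
Qed.

(* For a pair [k < l] of odd entries the three summands contribute
   [[x_l <_B x_k] + [x_l <_S x_k] + 1], which is odd iff the two comparisons agree. *)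
Lemma sign_invs_npair (R : pzRingType) d (s : d.-tuple T) :
  (-1) ^+ (invs kd rB s + invs ks rS s + npair kd s s)%N
  = (-1) ^+ (pair_count orders_agree s) :> R.
Proof.
rewrite /invs /npair !card_set_sum.
rewrite [X in (_ + X)%N](reindex_inj (can_inj swap_pairK)) -!big_split /=.
rewrite !expr_sum; apply: eq_bigr => -[k l] _ /=; rewrite !oddk_ks /orders_agree.
move: (k < l)%N (oddk (kd (tnth s k))) (oddk (kd (tnth s l)))
  (rB (tnth s l) < rB (tnth s k))%N (rS (tnth s l) < rS (tnth s k))%N.
by case=> [] [] [] [] []; rewrite /= ?(expr0, expr1, exprS, mulN1r, opprK, mulr1).
Qed.

Lemma sign_invs_npair_perm (R : pzRingType) d (s t : d.-tuple T) : perm_eq s t ->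
  (-1) ^+ (invs kd rB s + invs ks rS s + npair kd s s)%N
  = (-1) ^+ (invs kd rB t + invs ks rS t + npair kd t t)%N :> R.
Proof.
by move=> st; rewrite !sign_invs_npair (pair_count_perm orders_agree_sym st).
Qed.

End SignInvariance.

Section TensorAlgebra.
Variables (R : comNzRingType) (B : finType).
Implicit Types (kd : B -> kind) (G e : B -> B -> R).

Lemma prod_nat_eq_tnth d (t s : d.-tuple B) :
  \prod_(k < d) ((tnth t k == tnth s k)%:R : R) = (t == s)%:R.
Proof.
have [->|nts] := eqVneq t s; first by rewrite big1 // => k _; rewrite eqxx.
have [k hk] : exists k, tnth t k != tnth s k.
  apply/existsP; apply: contraR nts => /existsPn H; apply/eqP/eq_from_tnth => k.
  by apply/eqP; move: (H k); rewrite negbK.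
by rewrite (bigD1 k) //= (negbTE hk) mul0r.
Qed.

Lemma sum_mul_nat_eq (I : finType) (P : pred I) (F : I -> R) (i0 : I) :
  \sum_(i | P i) F i * (i == i0)%:R = (P i0)%:R * F i0.
Proof.
rewrite (big_mkcond P) (bigD1 i0) //= eqxx mulr1 big1 ?addr0.
  by case: (P i0); rewrite (mul1r, mul0r).
by move=> i /negbTE ni; rewrite ni mulr0; case: (P i).
Qed.

Lemma sum_tuple_prod d (F : 'I_d -> B -> R) :
  \sum_(u : d.-tuple B) \prod_(k < d) F k (tnth u k) = \prod_(k < d) \sum_(y : B) F k y.
Proof.
rewrite bigA_distr_bigA /= (reindex (fun u : d.-tuple B => [ffun k => tnth u k])) /=.
  by apply: eq_bigr => u _; apply: eq_bigr => k _; rewrite ffunE.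
apply: onW_bij; exists (fun f : {ffun 'I_d -> B} => [tuple f k | k < d]).
  by move=> u; apply: eq_from_tnth => k; rewrite tnth_mktuple ffunE.
by move=> f; apply/ffunP => k; rewrite ffunE tnth_mktuple.
Qed.

Lemma form1_delta G (x : B) (w : B -> R) : form1 G (delta R x) w = \sum_y G x y * w y.
Proof.
rewrite /form1 (bigD1 x) //= [X in _ + X]big1 ?addr0.
  by apply: eq_bigr => y _; rewrite /delta eqxx mul1r.
by move=> x' /negbTE nx; apply: big1 => y _; rewrite /delta eq_sym nx !mul0r.
Qed.

Lemma xvec_delta kd rk d (b s : d.-tuple B) :
  xvec kd rk (@delta R B) b s = (perm_eq s b)%:R * (-1) ^+ (invs kd rk b + invs kd rk s).
Proof.
rewrite /xvec -(sum_mul_nat_eq (fun t : d.-tuple B => perm_eq t b)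
  (fun t => (-1) ^+ (invs kd rk b + invs kd rk t))).
by apply: eq_bigr => t _; rewrite -prod_nat_eq_tnth.
Qed.

Section DualPairing.
Variables (G e : B -> B -> R) (kd : B -> kind).
Hypothesis G_even : forall x y, oddk (kd x) != oddk (kd y) -> G x y = 0.
Hypothesis e_dual : forall x z, \sum_y G z y * e x y = (x == z)%:R.

(* A nonzero product forces [s] and [u] to have the same parities entrywise. *)
Lemma npair_prod_even d (s u : d.-tuple B) :
  (-1) ^+ npair kd s u * \prod_(k < d) G (tnth s k) (tnth u k)
  = (-1) ^+ npair kd s s * \prod_(k < d) G (tnth s k) (tnth u k).
Proof.
case: (pickP [pred k | oddk (kd (tnth s k)) != oddk (kd (tnth u k))]) => [k nk|same].
  by rewrite (bigD1 k) //= G_even // !mul0r !mulr0.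
congr (_ ^+ _ * _); apply: eq_card => kl; rewrite !inE.
by have /negbFE/eqP -> := same kl.2.
Qed.

Lemma tensor_dual_pairing d (s t : d.-tuple B) :
  \sum_(u : d.-tuple B) \prod_(k < d) e (tnth t k) (tnth u k) *
     ((-1) ^+ npair kd s u * \prod_(k < d) G (tnth s k) (tnth u k))
  = (-1) ^+ npair kd s s * (t == s)%:R.
Proof.
under eq_bigr do rewrite npair_prod_even mulrCA.
rewrite -mulr_sumr; congr (_ * _).
under eq_bigr do rewrite -big_split /=.
rewrite (sum_tuple_prod (fun k y => e (tnth t k) y * G (tnth s k) y)).
rewrite -prod_nat_eq_tnth; apply: eq_bigr => k _.
by rewrite -e_dual; apply: eq_bigr => y _; rewrite mulrC.
Qed.

Lemma formd_yvec_dual (ks : B -> kind) rk d (X : d.-tuple B -> R) (b : d.-tuple B) :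
  formd G kd X (yvec ks rk e b)
  = \sum_(s : d.-tuple B) X s * ((-1) ^+ npair kd s s * yvec ks rk (@delta R B) b s).
Proof.
apply: eq_bigr => s _; under eq_bigr do rewrite -mulrA.
rewrite -mulr_sumr; congr (_ * _).
rewrite /yvec mulrCA; under eq_bigr do rewrite -mulrA.
rewrite -mulr_sumr; congr (_ * _).
rewrite xvec_delta -(sum_mul_nat_eq (fun t : d.-tuple B => perm_eq t b)
  (fun t => (-1) ^+ (invs ks rk b + invs ks rk t))) mulr_sumr /xvec.
under eq_bigr do rewrite mulr_suml.
rewrite exchange_big /=; apply: eq_bigr => t _.
under eq_bigr do rewrite -mulrA.
by rewrite -mulr_sumr tensor_dual_pairing mulrCA.
Qed.

End DualPairing.

Lemma cfact_perm kd d (b b' : d.-tuple B) : perm_eq b b' -> cfact kd b = cfact kd b'.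
Proof. by move=> bb'; apply: eq_bigr => x _; rewrite (seq.permP bb'). Qed.

Section DeltaPairing.
Variables (kd ks : B -> kind) (rB rS : B -> nat).
Hypotheses (oddk_ks : forall x, oddk (ks x) = oddk (kd x)).
Hypotheses (rB_inj : injective rB) (rS_inj : injective rS).

Lemma pairing_yvec_delta d (b b' : d.-tuple B) :
  \sum_(s : d.-tuple B) yvec kd rB (@delta R B) b' s *
     ((-1) ^+ npair kd s s * yvec ks rS (@delta R B) b s)
  = (perm_eq b b')%:R * ((-1) ^+ (invs kd rB b' + invs kd rB b + npair kd b b) *
     (cfact kd b * cfact ks b * #|[pred t : d.-tuple B | perm_eq t b]|)%:R).
Proof.
rewrite /yvec; under eq_bigr do rewrite !xvec_delta.
have [bb'|nbb'] := boolP (perm_eq b b'); last first.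
  rewrite mul0r; apply: big1 => s _.
  have [sb|_] := boolP (perm_eq s b); last by rewrite /= !(mulr0n, mul0r, mulr0).
  by rewrite (permPl sb) (negbTE nbb') /= !(mulr0n, mul0r, mulr0).
rewrite mul1r natrM mulr_natr -sumr_const mulr_sumr [RHS]big_mkcond /=.
apply: eq_bigr => s _; rewrite inE; have [sb|_] := boolP (perm_eq s b); last first.
  by rewrite /= !(mulr0n, mul0r, mulr0).
have sign_s := sign_invs_npair_perm oddk_ks rB_inj rS_inj R sb.
have sign_sq : (-1) ^+ invs ks rS b * (-1) ^+ invs ks rS b = 1 :> R.
  by rewrite -exprD -signr_odd addnn odd_double.
rewrite (permPl sb) bb' -(cfact_perm kd bb') !exprD natrM in sign_s *.
by rewrite /= mul1r; ring: sign_s sign_sq.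
Qed.

End DeltaPairing.

End TensorAlgebra.

Lemma seqB_oddk (B : finType) (k1 k2 : B -> kind) d (b : d.-tuple B) :
  (forall x, oddk (k1 x) = oddk (k2 x)) -> seqB k1 b = seqB k2 b.
Proof. by move=> k12; apply: eq_forallb => x; rewrite k12. Qed.

Lemma oddk_kindStar r O (x : Bt r O) : oddk (kindStar x) = oddk (kindB x).
Proof. by case: x => [[]|]. Qed.

Lemma cfact_kindB_kindStar r O d (b : d.-tuple (Bt r O)) : seqB (@kindB r O) b ->
  (cfact (@kindB r O) b * cfact (@kindStar r O) b)%N = \prod_(x : Bt r O) (count_mem x b)`!.
Proof.
move=> /forallP hb; rewrite /cfact !(big_mkcond (fun x => isKC _)) -big_split /=.
apply: eq_bigr => x _; case: x hb => [[i|i]|o] hb //=; rewrite ?muln1 ?mul1n //.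
by move: (hb (inr o)) => /=; case: (count_mem _ _) => [|[|]].
Qed.

Unset Implicit Arguments.
Set Strict Implicit.

Theorem lemma3p9 (R : idomainType)
  (hchar : forall n : nat, (n.+1)%:R != 0 :> R) (hpid : is_PID R)
  (r : nat) (O : finType)
  (G : Bt r O -> Bt r O -> R)
  (Geven : forall x y, oddk (kindB x) != oddk (kindB y) -> G x y = 0)
  (Gsym : exists eps : R, (eps = 1 \/ eps = -1) /\
     forall x y, G x y = eps * (-1) ^+ (oddk (kindB x) && oddk (kindB y)) * G y x)
  (Gnondeg : forall v : Bt r O -> R,
     (forall w : Bt r O -> R, form1 G v w = 0) -> forall x, v x = 0)
  (Gaa : forall i j : 'I_r, G (avec O i) (avec O j) = 0)
  (Gac : forall i j : 'I_r, G (avec O i) (cvec O j) = (i == j)%:R)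
  (bstar : Bt r O -> Bt r O -> R)
  (hdual : forall b b' : Bt r O, form1 G (delta R b') (bstar b) = (b == b')%:R)
  (ordB ordS : Bt r O -> nat) (injB : injective ordB) (injS : injective ordS)
  (d : nat) (b b' : d.-tuple (Bt r O))
  (hb : seqB (@kindB r O) b) (hb' : seqB (@kindB r O) b') :
  seqB (@kindStar r O) b /\
  exists s : R, (s = 1 \/ s = -1) /\
    formd G (@kindB r O) (yvec (@kindB r O) ordB (@delta R _) b')
                         (yvec (@kindStar r O) ordS bstar b)
    = s * (d`!)%:R * (perm_eq b b')%:R.
Proof.
have oddk_star := @oddk_kindStar r O.
split; first by rewrite (seqB_oddk _ oddk_star).
have G_dual x z : \sum_y G z y * bstar x y = (x == z)%:R by rewrite -hdual form1_delta.
rewrite (formd_yvec_dual Geven G_dual) (pairing_yvec_delta _ oddk_star injB injS).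
rewrite cfact_kindB_kindStar // card_perm_eq_tuple mulnC.
rewrite size_permutations_prod_fact size_tuple.
set sgn := (-1) ^+ _; exists sgn; split; last by rewrite mulrC.
by rewrite /sgn -signr_odd; case: odd; [right|left].
Qed.
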